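(* Let $G$ be a finite abelian group and let $N$ be a multiple of the exponent $\lambda(G)$ of $G$. Let $p_1,\ldots,p_k$ be distinct primes dividing $N$, and let $G_{p_i}$ be the Sylow $p_i$-subgroup of $G$. Fix $\epsilon>0$. (i) Given a generating set $S$ for $G$, one can compute generating sets $S_1,\ldots,S_k$ for $G_{p_1},\ldots,G_{p_k}$, each of size $|S|$, using $O(|S|\lg^{1+\epsilon}N)$ group operations. (ii) Given a uniformly distributed random $\beta\in G$, one can compute elements $\beta_1,\ldots,\beta_k$ uniformly distributed over $G_{p_1},\ldots,G_{p_k}$ respectively, using $O(\lg^{1+\epsilon}N)$ group operations.
   Context: Computations are generic: the group is accessed only through a black box performing multiplication and inversion and providing the identity, with cost measured in group operations. $\lg=\log_2$. The exponent $\lambda(G)$ is the least positive integer $n$ with $\alpha^n=1$ for all $\alpha\in G$. *)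

From mathcomp Require Import all_boot all_fingroup all_solvable.
From Stdlib Require Import Reals.
Set Implicit Arguments. Unset Strict Implicit. Unset Printing Implicit Defensive.

(* Generic (black-box) group computations, modelled as straight-line programs. Cost = number of instructions. *)
Inductive instr : Type :=
| IMul of nat & nat
| IInv of nat
| IOne.

Section SLP.
Local Open Scope group_scope.
Variable gT : finGroupType.

Definition exec (mem : seq gT) (c : instr) : gT :=
  match c with
  | IMul i j => nth 1 mem i * nth 1 mem j
  | IInv i => (nth 1 mem i)^-1
  | IOne => 1
  end.

Fixpoint run (mem : seq gT) (p : seq instr) : seq gT :=
  match p with
  | [::] => mem
  | c :: p' => run (rcons mem (exec mem c)) p'
  end.

Definition slp_out (p : seq instr) (ins : seq gT) (outs : seq nat) : seq gT :=
  [seq nth 1 (run ins p) i | i <- outs].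
End SLP.

Definition lg (N : nat) : R := (ln (INR N) / ln 2)%R.
Definition lg_pow (N : nat) (a : R) : R :=
  if (N <= 1)%N then 0%R else Rpower (lg N) a.

From mathcomp Require Import all_boot all_fingroup all_solvable.
From mathcomp Require Import zify.
Set Implicit Arguments. Unset Strict Implicit.

(* In an abelian group [G] of exponent dividing [N], [x |-> x ^+ N`_p^'] is a
   homomorphism from [G] onto its Sylow [p]-subgroup with fibres of equal size,
   so it maps generating sets to generating sets and uniform elements to
   uniform elements.  All [k] such powers are obtained from one exponentiation
   by the part of [N] prime to the [p]'s, followed by a balanced tree over the
   primes costing [O(lg N)] operations per level on [lg k + 1] levels; since
   [k <= lg N], [lg k] is dominated by [lg^eps N]. *)

Section PowerMorphism.
Local Open Scope group_scope.
Variables (gT : finGroupType) (G : {group gT}) (n : nat).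
Hypothesis cGG : abelian G.

Lemma expg_morphM : {in G &, {morph (fun x : gT => x ^+ n) : x y / x * y}}.
Proof. by move=> x y Gx Gy /=; apply: expgMn; apply: (centsP cGG). Qed.

Canonical expgm := Morphism expg_morphM.
End PowerMorphism.

Section MorphimFacts.
Local Open Scope group_scope.
Variables (gT rT : finGroupType) (G : {group gT}) (f : {morphism G >-> rT}).

Lemma card_fibre_morphim y :
  y \in f @* G -> (#|[set x in G | f x == y]| * #|f @* G|)%N = #|G|.
Proof.
case/morphimP=> z _ Gz ->.
have -> : [set x in G | f x == f z] = f @*^-1 [set f z].
  by apply/setP=> x; rewrite !inE.
rewrite morphpre_set1 // card_rcoset card_morphim setIid.
by apply: Lagrange; apply: subsetIl.
Qed.

Lemma morphim_gen_seq (S : seq gT) :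
  {subset S <= G} -> <<[set x in S]>> = G -> <<[set x in map f S]>> = f @* G.
Proof.
move=> sSG genS; have sSG' : [set x in S] \subset G.
  by apply/subsetP=> x; rewrite inE => /sSG.
have := morphim_gen f sSG'; rewrite genS => ->.
rewrite morphimEsub //; congr <<_>>.
by apply/setP=> y; rewrite inE; apply/mapP/imsetP=> -[x Sx ->]; exists x; rewrite ?inE in Sx *.
Qed.
End MorphimFacts.

Section SylowProjection.
Local Open Scope group_scope.
Variables (gT : finGroupType) (G P : {group gT}) (p N : nat).
Hypotheses (cGG : abelian G) (expG : exponent G %| N) (N_gt0 : (0 < N)%N).
Hypothesis sylP : P \in 'Syl_p(G).

Let hallP : p.-Sylow(G) P. Proof. by move: sylP; rewrite inE. Qed.

Lemma expg_p'part_Sylow x : x \in G -> x ^+ N`_p^' \in P.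
Proof.
move=> Gx; have nPG : P <| G by rewrite -sub_abelian_normal ?(pHall_sub hallP).
rewrite (mem_normal_Hall hallP nPG) ?groupX //.
apply: pnat_dvd (part_pnat p N); rewrite order_dvdn -expgM mulnC partnC //.
by apply/eqP; apply: (exponentP expG).
Qed.

Lemma morphim_expg_p'part : expgm N`_p^' cGG @* G = P.
Proof.
apply/eqP; rewrite eqEsubset; apply/andP; split.
  by apply/subsetP=> y /morphimP[x Gx _ ->]; apply: expg_p'part_Sylow.
apply/subsetP=> y Py.
have coPE : coprime #|P| N`_p^' by apply: pnat_coprime (pHall_pgroup hallP) (part_pnat _ _).
have Gy' : y ^+ expg_invn P N`_p^' \in G by rewrite (subsetP (pHall_sub hallP)) ?groupX.
by apply/morphimP; exists (y ^+ expg_invn P N`_p^') => //=; rewrite expgAC expgK.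
Qed.
End SylowProjection.

Section Run.
Variable gT : finGroupType.
Implicit Types (mem : seq gT) (p : seq instr).

Lemma run_cat mem p1 p2 : run mem (p1 ++ p2) = run (run mem p1) p2.
Proof. by elim: p1 mem => //= c p IH mem; rewrite IH. Qed.

Lemma size_run mem p : size (run mem p) = size mem + size p.
Proof. by elim: p mem => [|c p IH] mem /=; rewrite ?addn0 // IH size_rcons addSnnS. Qed.

Lemma nth_run_mem mem p i : i < size mem -> nth 1%g (run mem p) i = nth 1%g mem i.
Proof.
elim: p mem => //= c p IH mem lt_i.
by rewrite IH ?nth_rcons ?lt_i // size_rcons ltnW.
Qed.

Lemma nth_run_rcons mem p c :
  nth 1%g (run mem (rcons p c)) (size mem + size p) = exec (run mem p) c.
Proof. by rewrite -cats1 run_cat /= nth_rcons size_run ltnn eqxx. Qed.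
End Run.

(* Square-and-multiply; [fuel] only bounds the recursion ([e./2 < e]). *)
Fixpoint expn_prog_rec (fuel base r e : nat) : seq instr :=
  if fuel is f.+1 then
    if e == 0 then [:: IOne] else
    let q := expn_prog_rec f base r e./2 in
    let top := (base + size q).-1 in
    q ++ IMul top top :: (if odd e then [:: IMul top.+1 r] else [::])
  else [:: IOne].

Definition expn_prog base r e := expn_prog_rec e base r e.

Lemma size_expn_prog_rec_gt0 f base r e : 0 < size (expn_prog_rec f base r e).
Proof. by case: f => //= f; case: eqP => //= _; rewrite size_cat addnS. Qed.

Lemma size_expn_prog_rec f base r e k :
  e < 2 ^ k -> size (expn_prog_rec f base r e) <= k.*2.+1.
Proof.
elim: f e k => [|f IH] e k //=; case: eqP => // /eqP e_neq0.
case: k => [|k]; first by rewrite expn0 ltnS leqn0 (negbTE e_neq0).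
rewrite expnS => lt_e; have lt_half : e./2 < 2 ^ k.
  by rewrite ltn_half_double -mul2n.
have := IH _ _ lt_half; rewrite size_cat /= -!addnn; case: odd => /=; lia.
Qed.

Lemma size_expn_prog base r e : size (expn_prog base r e) <= 2 * trunc_log 2 e + 3.
Proof.
apply: leq_trans (size_expn_prog_rec _ _ _ (trunc_log_ltn _ (isT : 1 < 2))) _.
by rewrite -addnn; lia.
Qed.

Lemma expn_prog_rec_ok (gT : finGroupType) (mem : seq gT) f base r e :
  size mem = base -> r < base -> e <= f ->
  let p := expn_prog_rec f base r e in
  nth 1%g (run mem p) (base + size p).-1 = (nth 1%g mem r ^+ e)%g.
Proof.
move=> sz_mem lt_r; elim: f e => [|f IH] e /=.
  by rewrite leqn0 => /eqP->; rewrite addn1 /= nth_rcons -sz_mem ltnn eqxx.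
case: eqP => [-> _|/eqP e_neq0 le_ef] /=.
  by rewrite addn1 /= nth_rcons -sz_mem ltnn eqxx.
set q := expn_prog_rec f base r e./2 in IH *.
have q_gt0 : 0 < size q by apply: size_expn_prog_rec_gt0.
have half_ok := IH e./2 ltac:(by rewrite -ltnS (leq_trans _ le_ef) // ltn_half_double; lia).
set top := (base + size q).-1.
have sq_ok : nth 1%g (run mem (rcons q (IMul top top))) (base + size q)
             = (nth 1%g mem r ^+ (e./2).*2)%g.
  by rewrite -sz_mem nth_run_rcons /= half_ok -addnn expgD.
have := odd_double_half e; case: odd => /= e_eq.
  have -> : q ++ [:: IMul top top; IMul top.+1 r] = rcons (rcons q (IMul top top)) (IMul top.+1 r).
    by rewrite -!cats1 -catA.
  rewrite size_rcons addnS /= -sz_mem nth_run_rcons /= /top prednK ?addn_gt0 ?q_gt0 ?orbT //.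
  by rewrite sq_ok nth_run_mem ?size_rcons ?sz_mem // -expgSr -add1n e_eq.
by rewrite cats1 size_rcons addnS /= sq_ok -{2}e_eq.
Qed.

Lemma expn_prog_ok (gT : finGroupType) (mem : seq gT) base r e :
  size mem = base -> r < base ->
  let p := expn_prog base r e in
  nth 1%g (run mem p) (base + size p).-1 = (nth 1%g mem r ^+ e)%g.
Proof. by move=> sz_mem lt_r; apply: expn_prog_rec_ok. Qed.

Lemma leq_add_trunc_log p m n : 1 < p -> 0 < m -> 0 < n ->
  trunc_log p m + trunc_log p n <= trunc_log p (m * n).
Proof. by move=> p_gt1 m_gt0 n_gt0; rewrite trunc_log_max // expnD leq_mul ?trunc_logP. Qed.

Section CofactorTree.
Variable w : nat -> nat.

(* Given [y] in register [r], computes [y ^+ (W %/ w q)] for every [q] in [Q],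
   where [W] is the product of the weights: each half of [Q] is handed
   [y] raised to the weight of the other half. *)
Fixpoint cofactor_tree (d base r : nat) (Q : seq nat) : seq instr * seq nat :=
  if d is d'.+1 then
    if size Q <= 1 then ([::], nseq (size Q) r) else
    let Q1 := take (size Q)./2 Q in
    let Q2 := drop (size Q)./2 Q in
    let p1 := expn_prog base r (\prod_(q <- Q2) w q) in
    let b1 := base + size p1 in
    let p2 := expn_prog b1 r (\prod_(q <- Q1) w q) in
    let b2 := b1 + size p2 in
    let t1 := cofactor_tree d' b2 b1.-1 Q1 in
    let t2 := cofactor_tree d' (b2 + size t1.1) b2.-1 Q2 in
    (p1 ++ p2 ++ t1.1 ++ t2.1, t1.2 ++ t2.2)
  else ([::], nseq (size Q) r).

Lemma size_cofactor_tree_outs d base r Q : size (cofactor_tree d base r Q).2 = size Q.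
Proof.
elim: d Q base r => [|d IH] Q base r /=; first by rewrite size_nseq.
case: ifP => _ /=; first by rewrite size_nseq.
by rewrite size_cat !IH -size_cat cat_take_drop.
Qed.

Lemma cofactor_tree_outs_lt d base r Q : r < base ->
  all (fun o => o < base + size (cofactor_tree d base r Q).1) (cofactor_tree d base r Q).2.
Proof.
have leaf n r' base' : r' < base' -> all (fun o => o < base' + 0) (nseq n r').
  by move=> lt_r; apply/allP=> o /nseqP[-> _]; rewrite addn0.
elim: d Q base r => [|d IH] Q base r lt_r /=; first exact: leaf.
case: ifP => _ /=; first exact: leaf.
set p1 := expn_prog _ _ _; set p2 := expn_prog _ _ _.
set t1 := cofactor_tree _ _ _ _; set t2 := cofactor_tree _ _ _ _.
have p1_gt0 : 0 < size p1 by apply: size_expn_prog_rec_gt0.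
have p2_gt0 : 0 < size p2 by apply: size_expn_prog_rec_gt0.
rewrite all_cat !size_cat !addnA; apply/andP; split.
  apply/allP=> o /(allP (IH _ _ _ _)) o_lt; rewrite (leq_trans (o_lt _)) ?leq_addr //; lia.
by apply: IH; lia.
Qed.

Lemma cofactor_tree_ok (gT : finGroupType) d base r Q (mem : seq gT) :
  size mem = base -> r < base -> size Q <= 2 ^ d ->
  let t := cofactor_tree d base r Q in
  forall i, i < size Q -> exists e,
    nth 1%g (run mem t.1) (nth 0 t.2 i) = (nth 1%g mem r ^+ e)%g /\
    e * w (nth 0 Q i) = \prod_(q <- Q) w q.
Proof.
have leaf Q' r' (mem' : seq gT) i : size Q' <= 1 -> i < size Q' -> exists e,
    nth 1%g (run mem' [::]) (nth 0 (nseq (size Q') r') i) = (nth 1%g mem' r' ^+ e)%g /\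
    e * w (nth 0 Q' i) = \prod_(q <- Q') w q.
  case: Q' => [|q [|? ?]] // _; case: i => // _.
  by exists 1; rewrite expg1 mul1n big_seq1.
elim: d Q base r mem => [|d IH] Q base r mem sz_mem lt_r le_Q /=.
  by move=> i; apply: leaf; rewrite -(expn0 2).
case: ifP => [le_Q1|gt_Q1]; first by move=> i; apply: leaf.
set h := (size Q)./2; set Q1 := take h Q; set Q2 := drop h Q.
set p1 := expn_prog base r _; set b1 := base + size p1.
set p2 := expn_prog b1 r _; set b2 := b1 + size p2.
set t1 := cofactor_tree d b2 b1.-1 Q1; set t2 := cofactor_tree d _ b2.-1 Q2.
have le_hQ : h + h <= size Q <= (h + h).+1.
  by have := odd_double_half (size Q); rewrite -addnn /h; case: odd => /= <-; lia.
have sz_Q1 : size Q1 = h by rewrite size_take_min; lia.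
have sz_Q2 : size Q2 = size Q - h by rewrite size_drop.
have prodQ : \prod_(q <- Q) w q = \prod_(q <- Q1) w q * \prod_(q <- Q2) w q.
  by rewrite -big_cat cat_take_drop.
have p1_gt0 : 0 < size p1 by apply: size_expn_prog_rec_gt0.
have p2_gt0 : 0 < size p2 by apply: size_expn_prog_rec_gt0.
set mem2 := run (run mem p1) p2; set mem3 := run mem2 t1.1.
have sz_mem2 : size mem2 = b2 by rewrite !size_run sz_mem.
have sz_mem3 : size mem3 = b2 + size t1.1 by rewrite size_run sz_mem2.
have val2 : nth 1%g mem2 b1.-1 = (nth 1%g mem r ^+ \prod_(q <- Q2) w q)%g.
  by rewrite nth_run_mem ?expn_prog_ok ?size_run ?sz_mem //; lia.
have val3 : nth 1%g mem3 b2.-1 = (nth 1%g mem r ^+ \prod_(q <- Q1) w q)%g.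
  rewrite nth_run_mem ?sz_mem2; last lia.
  by rewrite expn_prog_ok ?size_run ?sz_mem ?nth_run_mem ?sz_mem //; lia.
rewrite expnS in le_Q; rewrite !run_cat -/mem2 -/mem3 => i lt_i.
have [lt_ih|le_hi] := ltnP i h.
  have [e [val_i eq_e]] := IH Q1 b2 b1.-1 mem2 sz_mem2 ltac:(lia) ltac:(lia) i ltac:(lia).
  exists (\prod_(q <- Q2) w q * e); rewrite nth_cat size_cofactor_tree_outs sz_Q1 lt_ih.
  rewrite nth_run_mem ?sz_mem3; last first.
    by apply: (allP (cofactor_tree_outs_lt _ _ _)); rewrite ?mem_nth ?size_cofactor_tree_outs //; lia.
  by rewrite val_i val2 -expgM; split=> //; rewrite -(nth_take 0 lt_ih) -mulnA eq_e prodQ mulnC.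
have [e [val_i eq_e]] := IH Q2 _ b2.-1 mem3 sz_mem3 ltac:(lia) ltac:(lia) (i - h) ltac:(lia).
exists (\prod_(q <- Q1) w q * e); rewrite nth_cat size_cofactor_tree_outs sz_Q1 ltnNge le_hi /=.
rewrite val_i val3 -expgM; split=> //.
by rewrite -{1}(subnKC le_hi) -nth_drop -mulnA eq_e prodQ.
Qed.

Lemma size_cofactor_tree d base r Q : all (fun q => 0 < w q) Q ->
  size (cofactor_tree d base r Q).1
    <= (2 * trunc_log 2 (\prod_(q <- Q) w q) + 6 * size Q) * d.
Proof.
elim: d Q base r => [|d IH] Q base r w_gt0 //=; case: ifP => // gt_Q1 /=.
set h := (size Q)./2; set Q1 := take h Q; set Q2 := drop h Q.
have [w1_gt0 w2_gt0] : all (fun q => 0 < w q) Q1 /\ all (fun q => 0 < w q) Q2.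
  by apply/andP; move: w_gt0; rewrite -(cat_take_drop h Q) all_cat.
have prod_gt0 Q' : all (fun q => 0 < w q) Q' -> 0 < \prod_(q <- Q') w q.
  by move=> /allP w'_gt0; rewrite big_seq; apply: prodn_cond_gt0.
have log_prod : trunc_log 2 (\prod_(q <- Q1) w q) + trunc_log 2 (\prod_(q <- Q2) w q)
                <= trunc_log 2 (\prod_(q <- Q) w q).
  by rewrite -(cat_take_drop h Q) big_cat /= leq_add_trunc_log ?prod_gt0.
have sz_Q : size Q = size Q1 + size Q2 by rewrite -size_cat cat_take_drop.
have ge_Q2 : 2 <= size Q by rewrite ltnNge gt_Q1.
rewrite !size_cat.
set p1 := expn_prog base r _; set p2 := expn_prog _ r _.
set t1 := cofactor_tree d _ _ Q1; set t2 := cofactor_tree d _ _ Q2.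
have p1_le : size p1 <= 2 * trunc_log 2 (\prod_(q <- Q2) w q) + 3 by apply: size_expn_prog.
have p2_le : size p2 <= 2 * trunc_log 2 (\prod_(q <- Q1) w q) + 3 by apply: size_expn_prog.
have t1_le := IH Q1 (base + size p1 + size p2) (base + size p1).-1 w1_gt0.
have t2_le := IH Q2 (base + size p1 + size p2 + size t1.1) (base + size p1 + size p2).-1 w2_gt0.
rewrite sz_Q in ge_Q2 *; rewrite -/t1 -/t2 in t1_le t2_le; nia.
Qed.
End CofactorTree.

Arguments cofactor_tree : simpl never.

Section SylowProgram.
Variable N : nat.
Hypothesis N_gt0 : 0 < N.
Implicit Type ps : seq nat.

Lemma coprime_part_prod p ps : prime p -> all prime ps -> p \notin ps ->
  coprime N`_p (\prod_(q <- ps) N`_q).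
Proof.
move=> p_pr; elim: ps => [|q ps IH] /=; first by rewrite big_nil coprimen1.
case/andP=> q_pr ps_pr; rewrite inE negb_or => /andP[p_neq_q p_notin].
rewrite big_cons coprimeMr IH // andbT !p_part coprimeXl // coprimeXr //.
by rewrite prime_coprime // dvdn_prime2.
Qed.

Lemma prod_part_dvdn ps : uniq ps -> all prime ps -> \prod_(p <- ps) N`_p %| N.
Proof.
elim: ps => [|p ps IH] /=; first by rewrite big_nil dvd1n.
case/andP=> p_notin ps_uniq /andP[p_pr ps_pr].
by rewrite big_cons Gauss_dvd ?coprime_part_prod ?dvdn_part ?IH.
Qed.

Lemma prod_part_ge ps : all prime ps -> all (dvdn^~ N) ps ->
  2 ^ size ps <= \prod_(p <- ps) N`_p.
Proof.
elim: ps => [|p ps IH] /=; first by rewrite big_nil.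
case/andP=> p_pr ps_pr /andP[p_dvd ps_dvd].
by rewrite big_cons expnS leq_mul ?IH // p_part_gt1 mem_primes p_pr N_gt0.
Qed.

Lemma size_le_trunc_log ps : uniq ps -> all prime ps -> all (dvdn^~ N) ps ->
  size ps <= trunc_log 2 N.
Proof.
move=> ps_uniq ps_pr ps_dvd; apply: trunc_log_max => //.
exact: leq_trans (prod_part_ge ps_pr ps_dvd) (dvdn_leq N_gt0 (prod_part_dvdn ps_uniq ps_pr)).
Qed.

Definition sylow_prog ps base r :=
  let p0 := expn_prog base r (N %/ \prod_(p <- ps) N`_p) in
  let t := cofactor_tree (fun p => N`_p) (trunc_log 2 (size ps)).+1
             (base + size p0) (base + size p0).-1 ps in
  (p0 ++ t.1, t.2).

Lemma size_sylow_prog_outs ps base r : size (sylow_prog ps base r).2 = size ps.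
Proof. exact: size_cofactor_tree_outs. Qed.

Lemma sylow_prog_outs_lt ps base r : r < base ->
  all (fun o => o < base + size (sylow_prog ps base r).1) (sylow_prog ps base r).2.
Proof.
move=> lt_r /=; rewrite size_cat addnA.
by apply: cofactor_tree_outs_lt; rewrite prednK ?addn_gt0 ?size_expn_prog_rec_gt0 ?orbT.
Qed.

Lemma sylow_prog_ok (gT : finGroupType) ps base r (mem : seq gT) i :
  size mem = base -> r < base -> uniq ps -> all prime ps -> i < size ps ->
  let s := sylow_prog ps base r in
  nth 1%g (run mem s.1) (nth 0 s.2 i) = (nth 1%g mem r ^+ N`_(nth 0 ps i)^')%g.
Proof.
move=> sz_mem lt_r ps_uniq ps_pr lt_i /=; rewrite run_cat.
set M := \prod_(p <- ps) N`_p; set p0 := expn_prog base r (N %/ M).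
have p0_gt0 : 0 < size p0 by apply: size_expn_prog_rec_gt0.
have sz_run : size (run mem p0) = base + size p0 by rewrite size_run sz_mem.
have le_k : size ps <= 2 ^ (trunc_log 2 (size ps)).+1 by apply/ltnW/trunc_log_ltn.
have [e [-> eq_e]] := @cofactor_tree_ok (fun p => N`_p) gT _ _ (base + size p0).-1 ps _
  sz_run ltac:(lia) le_k i lt_i.
rewrite expn_prog_ok // -expgM; congr (_ ^+ _)%g.
apply/eqP; rewrite -(eqn_pmul2r (part_gt0 (nth 0 ps i) N)) -mulnA eq_e.
by rewrite divnK ?prod_part_dvdn // mulnC partnC.
Qed.

Lemma size_sylow_prog ps base r :
  uniq ps -> all prime ps -> all (dvdn^~ N) ps -> ps != [::] ->
  size (sylow_prog ps base r).1 <= 13 * trunc_log 2 N * (trunc_log 2 (size ps)).+1.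
Proof.
move=> ps_uniq ps_pr ps_dvd ps_nil /=; rewrite size_cat.
set M := \prod_(p <- ps) N`_p; set c := (trunc_log 2 (size ps)).+1.
have M_dvd : M %| N := prod_part_dvdn ps_uniq ps_pr.
have M_gt0 : 0 < M by apply: leq_trans (prod_part_ge ps_pr ps_dvd); rewrite expn_gt0.
have log_M : trunc_log 2 (N %/ M) + trunc_log 2 M <= trunc_log 2 N.
  by rewrite -{2}(divnK M_dvd) leq_add_trunc_log // divn_gt0 // dvdn_leq.
have k_le : size ps <= trunc_log 2 M := trunc_log_max (isT : 1 < 2) (prod_part_ge ps_pr ps_dvd).
have k_gt0 : 0 < size ps by rewrite lt0n size_eq0.
have p0_le := size_expn_prog base r (N %/ M).
have part_gt0_all : all (fun p : nat => 0 < N`_p) ps by apply/allP=> p _; apply: part_gt0.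
have t_le := @size_cofactor_tree (fun p => N`_p) c
  (base + size (expn_prog base r (N %/ M))) (base + size (expn_prog base r (N %/ M))).-1
  ps part_gt0_all.
rewrite -/M in t_le; have c_gt0 : 0 < c by [].
nia.
Qed.

Lemma slp_sylow_prog (gT : finGroupType) ps (b : gT) i :
  uniq ps -> all prime ps -> i < size ps ->
  nth 1%g (slp_out (sylow_prog ps 1 0).1 [:: b] (sylow_prog ps 1 0).2) i
    = (b ^+ N`_(nth 0 ps i)^')%g.
Proof.
move=> ps_uniq ps_pr lt_i.
by rewrite (nth_map 0) ?size_sylow_prog_outs // sylow_prog_ok.
Qed.

Fixpoint sylow_progs ps base (rs : seq nat) : seq instr * seq (seq nat) :=
  if rs is r :: rs' then
    let s := sylow_prog ps base r in
    let t := sylow_progs ps (base + size s.1) rs' in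
    (s.1 ++ t.1, s.2 :: t.2)
  else ([::], [::]).

Lemma sylow_progs_cons ps base r rs :
  sylow_progs ps base (r :: rs) =
  let s := sylow_prog ps base r in
  let t := sylow_progs ps (base + size s.1) rs in (s.1 ++ t.1, s.2 :: t.2).
Proof. by []. Qed.

Lemma size_sylow_progs_outs ps base rs : size (sylow_progs ps base rs).2 = size rs.
Proof. by elim: rs base => [|r rs IH] base //; rewrite sylow_progs_cons /= IH. Qed.

Lemma size_sylow_progs ps base rs B :
  (forall base r, size (sylow_prog ps base r).1 <= B) ->
  size (sylow_progs ps base rs).1 <= size rs * B.
Proof.
move=> le_B; elim: rs base => [|r rs IH] base //.
by rewrite sylow_progs_cons size_cat mulSn leq_add.
Qed.

Lemma sylow_progs_ok (gT : finGroupType) ps rs base (mem : seq gT) j i :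
  size mem = base -> all (fun r => r < base) rs -> uniq ps -> all prime ps ->
  j < size rs -> i < size ps ->
  let t := sylow_progs ps base rs in
  nth 1%g (run mem t.1) (nth 0 (nth [::] t.2 j) i)
    = (nth 1%g mem (nth 0 rs j) ^+ N`_(nth 0 ps i)^')%g.
Proof.
move=> + + ps_uniq ps_pr + lt_i; elim: rs base mem j => [|r rs IH] base mem j //.
move=> sz_mem /andP[lt_r lt_rs] lt_j; rewrite sylow_progs_cons.
set s := sylow_prog ps base r.
have s_ok : nth 1%g (run mem s.1) (nth 0 s.2 i) = (nth 1%g mem r ^+ N`_(nth 0 ps i)^')%g.
  exact: sylow_prog_ok.
have s_lt : all (fun o => o < base + size s.1) s.2 by apply: sylow_prog_outs_lt.
have sz_s2 : size s.2 = size ps := size_sylow_prog_outs ps base r.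
clearbody s; rewrite /= run_cat.
have sz_run : size (run mem s.1) = base + size s.1 by rewrite size_run sz_mem.
case: j lt_j => [_|j lt_j] /=.
  by rewrite nth_run_mem ?s_ok // sz_run (allP s_lt) ?mem_nth ?sz_s2.
rewrite IH // ?nth_run_mem ?sz_mem ?(allP lt_rs) ?mem_nth //.
by apply/allP=> r' /(allP lt_rs) lt_r'; rewrite ltn_addr.
Qed.

Definition sylow_gens_prog ps m :=
  let t := sylow_progs ps m (iota 0 m) in
  (t.1, [seq [seq nth 0 o i | o <- t.2] | i <- iota 0 (size ps)]).

Lemma slp_sylow_gens_prog (gT : finGroupType) ps (S : seq gT) i :
  uniq ps -> all prime ps -> i < size ps ->
  let s := sylow_gens_prog ps (size S) in
  slp_out s.1 S (nth [::] s.2 i) = [seq b ^+ N`_(nth 0 ps i)^' | b <- S]%g.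
Proof.
move=> ps_uniq ps_pr lt_i /=; rewrite /slp_out (nth_map 0) ?size_iota // nth_iota //.
apply: (@eq_from_nth _ 1%g); first by rewrite !size_map size_sylow_progs_outs size_iota.
rewrite !size_map size_sylow_progs_outs size_iota => j lt_j.
rewrite (nth_map 0) ?size_map ?size_sylow_progs_outs ?size_iota //.
rewrite (nth_map [::]) ?size_sylow_progs_outs ?size_iota // (nth_map 1%g) //.
rewrite add0n sylow_progs_ok ?size_iota ?nth_iota //.
by apply/allP=> r; rewrite mem_iota.
Qed.
End SylowProgram.

Section SylowProgramOutputs.
Local Open Scope group_scope.
Variables (gT : finGroupType) (G P : {group gT}) (N : nat) (ps : seq nat) (i : nat).
Hypotheses (cGG : abelian G) (expG : exponent G %| N) (N_gt0 : (0 < N)%N).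
Hypotheses (ps_uniq : uniq ps) (ps_pr : all prime ps) (lt_i : (i < size ps)%N).
Hypothesis sylP : P \in 'Syl_(nth 0 ps i)(G).

Lemma sylow_gens_prog_gen (S : seq gT) :
  {subset S <= G} -> <<[set x in S]>> = G ->
  let s := sylow_gens_prog N ps (size S) in
  <<[set x in slp_out s.1 S (nth [::] s.2 i)]>> = P.
Proof.
move=> sSG genS /=; rewrite slp_sylow_gens_prog //.
by rewrite -(morphim_expg_p'part cGG expG N_gt0 sylP); apply: morphim_gen_seq.
Qed.

Let f (b : gT) := nth 1 (slp_out (sylow_prog N ps 1 0).1 [:: b] (sylow_prog N ps 1 0).2) i.

Lemma sylow_prog_in_Sylow b : b \in G -> f b \in P.
Proof. by move=> Gb; rewrite /f slp_sylow_prog // (expg_p'part_Sylow cGG expG N_gt0 sylP). Qed.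

Lemma card_sylow_prog_fibre y : y \in P -> (#|[set b in G | f b == y]| * #|P|)%N = #|G|.
Proof.
rewrite -(morphim_expg_p'part cGG expG N_gt0 sylP) => Py.
rewrite -(card_fibre_morphim Py); congr (_ * _)%N.
by apply: eq_card => b; rewrite !inE /f slp_sylow_prog.
Qed.
End SylowProgramOutputs.

(* [Reals] rebinds [_ ^ _] and the [%N] key on [nat]; nat powers below are [expn]. *)
From Stdlib Require Import Reals Lra.

Section CostBound.
Local Open Scope R_scope.

Lemma ln2_gt0 : 0 < ln 2.
Proof. by have := ln_lt_2; lra. Qed.

Lemma ln_le x y : 0 < x -> x <= y -> ln x <= ln y.
Proof. by move=> x_gt0 /Rle_lt_or_eq_dec[lt_xy | ->]; [left; apply: ln_increasing | right]. Qed.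

Lemma INR_leq m n : (m <= n)%nat -> INR m <= INR n.
Proof. by move/leP; apply: le_INR. Qed.

Lemma INR_expn2 t : INR (expn 2 t) = 2 ^ t.
Proof. by elim: t => [//|t IH]; rewrite expnS mulnE mult_INR IH /=. Qed.

Lemma le_log2 t X : 0 < X -> 2 ^ t <= X -> INR t <= ln X / ln 2.
Proof.
move=> X_gt0 le_X; apply: (Rmult_le_reg_r _ _ _ ln2_gt0).
rewrite /Rdiv Rmult_assoc Rinv_l ?Rmult_1_r; last by have := ln2_gt0; lra.
by rewrite -ln_pow; [apply: ln_le => //; apply: pow_lt | ]; lra.
Qed.

Lemma trunc_log_le_lg N : (0 < N)%nat -> INR (trunc_log 2 N) <= lg N.
Proof.
move=> N_gt0; apply: le_log2; first by apply: lt_0_INR; apply/ltP.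
by rewrite -INR_expn2; apply/INR_leq/trunc_logP.
Qed.

Definition cost_const eps := 13 * (1 / (eps * ln 2) + 1).

(* [c] is at most [log log N], which [ln x <= x - 1] bounds by
   [lg^eps N / (eps ln 2)]. *)
Lemma cost_bound eps N c : 0 < eps -> (1 < N)%nat -> (expn 2 c <= trunc_log 2 N)%nat ->
  INR (13 * trunc_log 2 N * c.+1) <= cost_const eps * lg_pow N (1 + eps).
Proof.
move=> eps_gt0 N_gt1 le_c; have ln2_pos := ln2_gt0.
set L := lg N; set T := trunc_log 2 N.
have T_le : INR T <= L by apply/trunc_log_le_lg/ltnW.
have T_ge1 : 1 <= INR T.
  by apply: (@INR_leq 1 T); apply: leq_trans le_c; rewrite expn_gt0.
have c_le : INR c <= ln L / ln 2.
  by apply: le_log2; [lra | apply: Rle_trans T_le; rewrite -INR_expn2; apply: INR_leq].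
have -> : lg_pow N (1 + eps) = L * Rpower L eps.
  by rewrite /lg_pow leqNgt N_gt1 /= -/L Rpower_plus Rpower_1 //; lra.
have lnL_ge0 : 0 <= ln L by rewrite -ln_1; apply: ln_le; lra.
have pow_ge : eps * ln L <= Rpower L eps - 1.
  by rewrite /Rpower; have := exp_ineq1_le (eps * ln L); lra.
have c1_le : INR c + 1 <= (1 / (eps * ln 2) + 1) * Rpower L eps.
  have eq_c : ln L / ln 2 = (eps * ln L) * (1 / (eps * ln 2)) by field; lra.
  rewrite eq_c in c_le.
  have : 0 < 1 / (eps * ln 2) by apply: Rdiv_lt_0_compat; [lra | apply: Rmult_lt_0_compat].
  have := Rmult_le_pos _ _ (Rlt_le _ _ eps_gt0) lnL_ge0; nra.
rewrite !mulnE !mult_INR (S_INR c) /cost_const; have -> : INR 13 = 13 by rewrite /=; lra.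
have := pos_INR c; nra.
Qed.

Lemma cost_const_ge0 eps : 0 < eps -> 0 <= cost_const eps.
Proof.
move=> eps_gt0; have ln2_pos := ln2_gt0.
have : 0 < 1 / (eps * ln 2) by apply: Rdiv_lt_0_compat; [lra | apply: Rmult_lt_0_compat].
by rewrite /cost_const; lra.
Qed.

Lemma lg_pow_ge0 N a : 0 <= lg_pow N a.
Proof. by rewrite /lg_pow; case: ifP => _; [lra | apply/Rlt_le/exp_pos]. Qed.
End CostBound.

Theorem lemma7 :
  forall eps : R, (0 < eps)%R ->
  exists C : R,
  forall (N : nat) (ps : seq nat),
    (0 < N)%N -> uniq ps -> all prime ps -> all (fun p => p %| N) ps ->
  (* (i) *)
  (forall m : nat,
     exists (prog : seq instr) (outs : seq (seq nat)),
       (INR (size prog) <= C * INR m * lg_pow N (1 + eps))%R /\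
       size outs = size ps /\ all (fun o => size o == m) outs /\
       forall (gT : finGroupType) (G : {group gT}),
         abelian G -> exponent G %| N ->
         forall S : seq gT, size S = m -> {subset S <= G} ->
           <<[set x in S]>>%g = G ->
           forall i, (i < size ps)%N ->
           forall P : {group gT}, (P \in 'Syl_(nth 0%N ps i)(G))%g ->
             <<[set x in slp_out prog S (nth [::] outs i)]>>%g = P)
  /\
  (* (ii) *)
  (exists (prog : seq instr) (outs : seq nat),
     (INR (size prog) <= C * lg_pow N (1 + eps))%R /\
     size outs = size ps /\
     forall (gT : finGroupType) (G : {group gT}),
       abelian G -> exponent G %| N ->
       forall i, (i < size ps)%N ->
       forall P : {group gT}, (P \in 'Syl_(nth 0%N ps i)(G))%g ->
         let f := fun b : gT => nth 1%g (slp_out prog [:: b] outs) i in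
         (forall b, b \in G -> f b \in P) /\
         (forall y, y \in P -> (#|[set b in G | f b == y]| * #|P|)%N = #|G|)).
Proof.
move=> eps eps_gt0; exists (cost_const eps) => N ps N_gt0 ps_uniq ps_pr ps_dvd.
have C_ge0 := cost_const_ge0 eps_gt0; have lg_ge0 := lg_pow_ge0 N (1 + eps).
have [-> | ps_nil] := eqVneq ps [::].
  split=> [m|]; exists [::], [::]; do !split => //=; last exact: Rmult_le_pos.
  by apply: Rmult_le_pos => //; apply: Rmult_le_pos => //; apply: pos_INR.
have k_le := size_le_trunc_log N_gt0 ps_uniq ps_pr ps_dvd.
have k_gt0 : (0 < size ps)%nat by rewrite lt0n size_eq0.
set K := (13 * trunc_log 2 N * (trunc_log 2 (size ps)).+1)%nat.
have le_K : (INR K <= cost_const eps * lg_pow N (1 + eps))%R.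
  apply: cost_bound; rewrite // ?(leq_trans (trunc_logP _ _) k_le) //.
  by move: (leq_trans k_gt0 k_le); rewrite trunc_log_gt0 => /andP[].
have size_K base r : (size (sylow_prog N ps base r).1 <= K)%nat by apply: size_sylow_prog.
split=> [m|].
  exists (sylow_gens_prog N ps m).1, (sylow_gens_prog N ps m).2; split; [|split; [|split]].
  - have le_mK : (size (sylow_gens_prog N ps m).1 <= m * K)%nat.
      by rewrite -{2}(size_iota 0 m); apply: size_sylow_progs.
    apply: Rle_trans (INR_leq le_mK) _; rewrite mulnE mult_INR.
    by have := pos_INR m; nra.
  - by rewrite size_map size_iota.
  - by apply/allP=> _ /mapP[i _ ->]; rewrite size_map size_sylow_progs_outs size_iota.
  move=> gT G cGG expG S <- sSG genS i lt_i P sylP.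
  exact: (sylow_gens_prog_gen cGG expG N_gt0 ps_uniq ps_pr lt_i sylP).
exists (sylow_prog N ps 1 0).1, (sylow_prog N ps 1 0).2; split; [|split].
- exact: Rle_trans (INR_leq (size_K 1%nat 0%nat)) le_K.
- exact: size_sylow_prog_outs.
move=> gT G cGG expG i lt_i P sylP f; split.
- exact: (sylow_prog_in_Sylow cGG expG N_gt0 ps_uniq ps_pr lt_i sylP).
- exact: (card_sylow_prog_fibre cGG expG N_gt0 ps_uniq ps_pr lt_i sylP).
Qed.
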